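(* Let $k$ be a field, $Q=(Q_0,Q_1)$ a quiver, and $\widehat{T}_{\Sigma}(V)$ the associated complete tensor algebra (complete path algebra). Let $G$ be a homogeneous group of continuous algebra automorphisms of $\widehat{T}_{\Sigma}(V)$ which is invariant on $\Sigma$. Let $\omega$ be a space of path of length $m\ge 1$, and fix, for every subpath $\omega'$ of $\omega$, a space of irreducible invariants $V^G_{\omega',\mathrm{irr}}$. Then the canonical map $$\psi_{\omega}:\bigoplus_{p} V^G_{\omega,p,\mathrm{irr}}\longrightarrow V^G_{\omega},$$ where $p$ runs through all ordered partitions of $m$, is surjective.
   Context: $k$ is a discrete topological field. For $i,j\in Q_0$, $VQ_{i,j}$ is the $k$-vector space spanned by the arrows of $Q$ from $i$ to $j$. $\Sigma=\prod_{i\in Q_0}ke_i$ (a topologically semisimple pseudocompact algebra), $V=\prod_{i,j\in Q_0}VQ_{i,j}$ (a pseudocompact $\Sigma$-bimodule), $V^{\widehat{\otimes}_0}=\Sigma$, $V^{\widehat{\otimes}_n}=V\widehat{\otimes}_{\Sigma}V^{\widehat{\otimes}_{n-1}}$ (completed tensor product over $\Sigma$), and $\widehat{T}_{\Sigma}(V)=\prod_{n\ge0}V^{\widehat{\otimes}_n}$ with the product topology and multiplication given by the completed tensor product. A continuous algebra automorphism $g$ is homogeneous if $g(V^{\widehat{\otimes}_n})=V^{\widehat{\otimes}_n}$ for all $n\in\mathbb{N}$; a group is homogeneous if all its elements are. $G$ is invariant on $\Sigma$ means every element of $G$ acts as the identity on $\Sigma$; then each $V^{\widehat{\otimes}_n}$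 is a $kG$-module and $G$ preserves the subspaces below. For a $G$-stable subspace $W$, $W^G$ denotes the fixed points. An arrow space is a nonzero $V_a=VQ_{i,j}$ (from $i$ to $j$). For a sequence of arrow spaces $V_{a_1},\dots,V_{a_m}$ with $V_{a_n}=VQ_{i_{n-1},i_n}$, the space $V_\omega=V_{a_m}\widehat{\otimes}_\Sigma\cdots\widehat{\otimes}_\Sigma V_{a_1}\subseteq V^{\widehat{\otimes}_m}$ is a space of path $\omega$ from $i_0$ to $i_m$ of length $m$; spaces of paths contained in $V_\omega$ of the form $V_{a_t}\widehat{\otimes}_\Sigma\cdots\widehat{\otimes}_\Sigma V_{a_s}$ are its subpaths. A 2-partition $\omega=\omega_2\omega_1$ is a pair of subpaths with $V_\omega=V_{\omega_2}\widehat{\otimes}_\Sigma V_{\omega_1}$; $\varphi_{\omega_1,\omega_2}:V^G_{\omega_2}\widehat{\otimes}_\Sigma V^G_{\omega_1}\to V^G_\omega$ is the canonical map (multiplication), and $\varphi_\omega=\sum_{\omega_2\omega_1=\omega}\varphi_{\omega_1,\omega_2}$. The image of $\varphi_\omega$ is the space of composite invariants, and a space of irreducible invariants $V^G_{\omega,\mathrm{irr}}$ is any fixed complement of $\mathrm{Im}\,\varphi_\omega$ in $V^G_\omega$ (for length $1$, $\varphi_\omega=0$ and $V^G_{\omega,\mathrm{irr}}=V^G_\omega$). For an ordered partition $p=(m_l,\dots,m_1)$ of $m$ into positive integers, write $\omega=\omega_{m_l}\cdots\omega_{m_1}$ with $\omega_{m_t}$ the unique subpath of length $m_t$ in this position,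 and set $V^G_{\omega,p,\mathrm{irr}}=V^G_{\omega_{m_l},\mathrm{irr}}\widehat{\otimes}_\Sigma\cdots\widehat{\otimes}_\Sigma V^G_{\omega_{m_1},\mathrm{irr}}$. The map $\psi_\omega$ is the sum of the canonical (multiplication) maps $V^G_{\omega,p,\mathrm{irr}}\to V^G_\omega$. *)

From HB Require Import structures.
From mathcomp Require Import all_boot all_order all_algebra.
Set Implicit Arguments. Unset Strict Implicit. Unset Printing Implicit Defensive.
Import GRing.Theory.
Local Open Scope ring_scope.

Section QuiverInvariants.
Variable k : fieldType.
(* The quiver: vertex set Q0, and n i j = number of arrows from i to j
   (VQ_{i,j} is k^(n i j), with basis the arrows). *)
Variable Q0 : Type.
Variable n : Q0 -> Q0 -> nat.

(* A homogeneous continuous automorphism acting as the identity on Sigma is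
   determined by (and determines) its restriction to V, which is a family of
   invertible linear maps of the arrow spaces VQ_{i,j}.  Column convention:
   g(arrow number s from i to j) = sum_r (g i j) r s * (arrow number r). *)
Definition fam := forall i j : Q0, 'M[k]_(n i j).

Definition fam1 : fam := fun i j => 1%:M.
Definition fammul (g h : fam) : fam := fun i j => g i j *m h i j.
Definition faminv (g : fam) : fam := fun i j => invmx (g i j).

Definition is_group (G : fam -> Prop) : Prop :=
  [/\ G fam1,
      (forall g h, G g -> G h -> G (fammul g h)),
      (forall g, G g -> forall i j, g i j \in unitmx) &
      (forall g, G g -> G (faminv g))].

(* A space of path is a sequence of arrow spaces a_1, ..., a_m, each a pair
   (source, target), listed from the first arrow a_1 to the last a_m. *)
Fixpoint composable (arrs : seq (Q0 * Q0)) : Prop :=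
  match arrs with
  | a :: ((b :: _) as arrs') => a.2 = b.1 /\ composable arrs'
  | _ => True
  end.

(* Elements of the tensor algebra in the (finite dimensional) subspace V_omega
   are represented by their coordinates on the basis of paths: a basis path of
   V_omega is a list [r_1; ...; r_m] of arrow numbers, r_t < n (a_t).1 (a_t).2,
   representing the basis element b_{r_m} (x) ... (x) b_{r_1}. *)
Definition tensor := seq nat -> k.

Definition tzero : tensor := fun _ => 0.
Definition tadd (x y : tensor) : tensor := fun r => x r + y r.
Definition tscale (c : k) (x : tensor) : tensor := fun r => c * x r.

Definition valid (arrs : seq (Q0 * Q0)) (r : seq nat) : bool :=
  (size r == size arrs) && all2 (fun (ri : nat) a => ri < n a.1 a.2)%N r arrs.

Definition in_space (arrs : seq (Q0 * Q0)) (x : tensor) : Prop :=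
  forall r, ~~ valid arrs r -> x r = 0.

Fixpoint idx (arrs : seq (Q0 * Q0)) : seq (seq nat) :=
  match arrs with
  | [::] => [:: [::]]
  | a :: arrs' => [seq x :: y | x <- iota 0 (n a.1 a.2), y <- idx arrs']
  end.

Definition coef (d : nat) (M : 'M[k]_d) (r s : nat) : k :=
  match (insub r : option 'I_d), (insub s : option 'I_d) with
  | Some r', Some s' => M r' s'
  | _, _ => 0
  end.

(* matrix coefficient of g acting on V_omega = tensor product of the g_{a_t} *)
Fixpoint wcoef (g : fam) (arrs : seq (Q0 * Q0)) (r s : seq nat) : k :=
  match arrs, r, s with
  | [::], [::], [::] => 1
  | a :: arrs', ri :: r', si :: s' =>
      coef (g a.1 a.2) ri si * wcoef g arrs' r' s'
  | _, _, _ => 0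
  end.

Definition act (g : fam) (arrs : seq (Q0 * Q0)) (x : tensor) : tensor :=
  fun r => if valid arrs r then \sum_(s <- idx arrs) wcoef g arrs r s * x s
           else 0.

Definition fixed (G : fam -> Prop) (arrs : seq (Q0 * Q0)) (x : tensor) : Prop :=
  in_space arrs x /\ forall g, G g -> act g arrs x = x.

(* Product (in the tensor algebra) of x in V_{omega_2} and y in V_{omega_1},
   where omega_1 consists of the first l1 arrows: x * y. *)
Definition tmul (l1 : nat) (x y : tensor) : tensor :=
  fun r => x (drop l1 r) * y (take l1 r).

Inductive tspan (P : tensor -> Prop) : tensor -> Prop :=
| tspan0 : tspan P tzero
| tspanS c v w : P v -> tspan P w -> tspan P (tadd (tscale c v) w).

Definition subspace (W : tensor -> Prop) : Prop :=
  [/\ W tzero, (forall x y, W x -> W y -> W (tadd x y)) &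
      (forall c x, W x -> W (tscale c x))].

Definition composite (G : fam -> Prop) (arrs : seq (Q0 * Q0)) : tensor -> Prop :=
  tspan (fun z => exists l1 x y, [/\ (0 < l1)%N, (l1 < size arrs)%N,
          fixed G (drop l1 arrs) x, fixed G (take l1 arrs) y & z = tmul l1 x y]).

Definition irr_space (G : fam -> Prop) (arrs : seq (Q0 * Q0))
    (W : tensor -> Prop) : Prop :=
  [/\ subspace W,
      (forall x, W x -> fixed G arrs x),
      (forall x, W x -> composite G arrs x -> x = tzero) &
      (forall x, fixed G arrs x ->
         exists y z, [/\ W y, composite G arrs z & x = tadd y z])].

Definition subpath (arrs : seq (Q0 * Q0)) (s l : nat) := take l (drop s arrs).

(* isProd Irr s l p x : x = x_j * ... * x_1 with x_1 in Irr s l and the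
   later factors along the parts p (ordered from the start of the path). *)
Fixpoint isProd (Irr : nat -> nat -> tensor -> Prop) (s l : nat) (p : seq nat)
    (x : tensor) : Prop :=
  match p with
  | [::] => Irr s l x
  | l' :: p' => exists y z,
      [/\ Irr s l y, isProd Irr (s + l)%N l' p' z & x = tmul l z y]
  end.

(* the union over ordered partitions p of m of the images of the
   elementary tensors of V^G_{omega,p,irr} under the multiplication map *)
Definition irr_products (Irr : nat -> nat -> tensor -> Prop) (m : nat)
    (x : tensor) : Prop :=
  exists l p, [/\ all (fun j => 0 < j)%N (l :: p), (l + sumn p = m)%N &
                  isProd Irr 0 l p x].

End QuiverInvariants.

(* An invariant of V_omega is an irreducible invariant plus a composite one,
   and a composite invariant is a linear combination of products x * y of
   invariants of two complementary shorter subpaths.  By strong induction on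
   the length, each of x and y is a linear combination of products of
   irreducible invariants along ordered partitions of its subpath; since the
   multiplication is bilinear, x * y is then a combination of such products
   along the concatenated partitions. *)

From mathcomp Require Import all_boot all_order all_algebra.
From mathcomp Require Import zify.
From Stdlib Require Import FunctionalExtensionality.
Import GRing.Theory.

Set Implicit Arguments.
Unset Strict Implicit.
Unset Printing Implicit Defensive.

Section TensorSpan.
Variable k : fieldType.
Local Open Scope ring_scope.
Implicit Types (P Q : tensor k -> Prop) (x y v w : tensor k) (c : k).

Lemma tspan_in P x : P x -> tspan P x.
Proof.
move=> Px; have -> : x = tadd (tscale 1 x) (tzero k).
  by apply: functional_extensionality => r; rewrite /tadd /tscale /tzero mul1r addr0.
exact/tspanS/tspan0.
Qed.

Lemma tspan_add P x y : tspan P x -> tspan P y -> tspan P (tadd x y).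
Proof.
elim=> [|c v w Pv _ IHw] Py.
  by have -> : tadd (tzero k) y = y
    by apply: functional_extensionality => r; rewrite /tadd /tzero add0r.
have -> : tadd (tadd (tscale c v) w) y = tadd (tscale c v) (tadd w y).
  by apply: functional_extensionality => r; rewrite /tadd addrA.
exact: tspanS (IHw Py).
Qed.

Lemma tspan_scale P c x : tspan P x -> tspan P (tscale c x).
Proof.
elim=> [|d v w Pv _ IHw].
  have -> : tscale c (tzero k) = tzero k.
    by apply: functional_extensionality => r; rewrite /tscale /tzero mulr0.
  exact: tspan0.
have -> : tscale c (tadd (tscale d v) w) = tadd (tscale (c * d) v) (tscale c w).
  by apply: functional_extensionality => r; rewrite /tadd /tscale mulrDr mulrA.
exact: tspanS.
Qed.

Lemma tspan_linear (f : tensor k -> tensor k) P Q :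
  f (tzero k) = tzero k ->
  (forall c v w, f (tadd (tscale c v) w) = tadd (tscale c (f v)) (f w)) ->
  (forall v, P v -> tspan Q (f v)) ->
  forall x, tspan P x -> tspan Q (f x).
Proof.
move=> f0 fL PQ x; elim=> [|c v w Pv _ IHw]; first by rewrite f0; exact: tspan0.
by rewrite fL; apply: tspan_add => //; apply/tspan_scale/PQ.
Qed.

Lemma tspan_bind P Q x :
  tspan P x -> (forall y, P y -> tspan Q y) -> tspan Q x.
Proof. by move=> Px PQ; apply: (@tspan_linear id P Q erefl (fun _ _ _ => erefl) PQ). Qed.

Lemma tmul0t l y : tmul l (tzero k) y = tzero k.
Proof. by apply: functional_extensionality => r; rewrite /tmul /tzero mul0r. Qed.

Lemma tmult0 l x : tmul l x (tzero k) = tzero k.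
Proof. by apply: functional_extensionality => r; rewrite /tmul /tzero mulr0. Qed.

Lemma tmul_linear_l l y c v w :
  tmul l (tadd (tscale c v) w) y = tadd (tscale c (tmul l v y)) (tmul l w y).
Proof.
by apply: functional_extensionality => r; rewrite /tmul /tadd /tscale mulrDl mulrA.
Qed.

Lemma tmul_linear_r l x c v w :
  tmul l x (tadd (tscale c v) w) = tadd (tscale c (tmul l x v)) (tmul l x w).
Proof.
by apply: functional_extensionality => r; rewrite /tmul /tadd /tscale mulrDr mulrCA.
Qed.

Lemma tspan_mul P Q l x y :
  tspan P x -> tspan Q y ->
  tspan (fun z => exists a b, [/\ P a, Q b & z = tmul l a b]) (tmul l x y).
Proof.
move=> Px Qy; apply: (@tspan_linear (tmul l ^~ y) P _ _ _ _ _ Px) => [||v Pv].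
- exact: tmul0t.
- exact: tmul_linear_l.
apply: (@tspan_linear (tmul l v) Q _ _ _ _ _ Qy) => [||u Qu].
- exact: tmult0.
- exact: tmul_linear_r.
by apply: tspan_in; exists v, u.
Qed.

Lemma tmulA (a b : nat) (z w y : tensor k) :
  tmul (a + b) z (tmul a w y) = tmul a (tmul b z w) y.
Proof.
apply: functional_extensionality => r.
by rewrite /tmul drop_drop take_drop take_takel ?leq_addr // (addnC b a) mulrA.
Qed.

End TensorSpan.

Section IrreducibleProducts.
Variable k : fieldType.
Variable Irr : nat -> nat -> tensor k -> Prop.

(* [irr_products Irr m] is [irr_products_from 0 m], by conversion. *)
Definition irr_products_from (s m : nat) (x : tensor k) : Prop :=
  exists l p, [/\ all (fun j => 0 < j) (l :: p), l + sumn p = m &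
                  isProd Irr s l p x].

Lemma isProd_cat p s a b q y z :
  isProd Irr s a p y -> isProd Irr (s + (a + sumn p)) b q z ->
  isProd Irr s a (p ++ b :: q) (tmul (a + sumn p) z y).
Proof.
elim: p s a y => [|l p IHp] s a y /=.
  by rewrite !addn0 => Py Pz; exists y, z.
move=> [y0 [w [Iy0 Pw ->]]] Pz; exists y0, (tmul (l + sumn p) z w).
by split; [|apply: IHp; rewrite // -addnA | exact: tmulA].
Qed.

Lemma irr_products_from_irr s l x :
  0 < l -> Irr s l x -> irr_products_from s l x.
Proof. by move=> l_gt0 Ix; exists l, [::]; rewrite /= l_gt0 addn0. Qed.

Lemma irr_products_from_mul s l1 l2 z y :
  irr_products_from (s + l1) l2 z -> irr_products_from s l1 y ->
  irr_products_from s (l1 + l2) (tmul l1 z y).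
Proof.
move=> [b [q [/= /andP[b_gt0 q_gt0] Eq Pz]]] [a [p [/= /andP[a_gt0 p_gt0] Ep Py]]].
exists a, (p ++ b :: q); split.
- by rewrite /= a_gt0 all_cat p_gt0 /= b_gt0.
- by rewrite sumn_cat /=; lia.
- by rewrite -Ep; apply: isProd_cat; rewrite // Ep.
Qed.

End IrreducibleProducts.

Section Subpaths.
Variable T : Type.
Implicit Type arrs : seq (T * T).

Lemma size_subpath arrs s l :
  s + l <= size arrs -> size (subpath arrs s l) = l.
Proof. by move=> sl_le; rewrite /subpath size_takel // size_drop; lia. Qed.

Lemma take_subpath arrs s l l1 :
  l1 <= l -> take l1 (subpath arrs s l) = subpath arrs s l1.
Proof. by move=> l1_le; rewrite /subpath take_takel. Qed.

Lemma drop_subpath arrs s l l1 :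
  l1 <= l -> drop l1 (subpath arrs s l) = subpath arrs (s + l1) (l - l1).
Proof.
by move=> l1_le; rewrite /subpath -{1}(subnK l1_le) -take_drop drop_drop addnC.
Qed.

Lemma subpath_full arrs : subpath arrs 0 (size arrs) = arrs.
Proof. by rewrite /subpath drop0 take_size. Qed.

End Subpaths.

Section Decomposition.
Variables (k : fieldType) (Q0 : Type) (n : Q0 -> Q0 -> nat).
Variables (G : fam k n -> Prop) (arrs : seq (Q0 * Q0)).
Variable Irr : nat -> nat -> tensor k -> Prop.
Hypothesis HIrr : forall s l, 0 < l -> s + l <= size arrs ->
  irr_space G (subpath arrs s l) (Irr s l).

Lemma fixed_subpath_irr_products l s x :
  0 < l -> s + l <= size arrs -> fixed G (subpath arrs s l) x ->
  tspan (irr_products_from Irr s l) x.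
Proof.
elim/ltn_ind: l s x => l IHl s x l_gt0 sl_le Fx.
have [_ _ _ irr_compl] := HIrr l_gt0 sl_le.
have [y [z [Iy Cz ->]]] := irr_compl x Fx.
apply: tspan_add; first exact/tspan_in/irr_products_from_irr.
apply: (tspan_bind Cz) => _ [l1 [x2 [y1 [l1_gt0 l1_lt Fx2 Fy1 ->]]]].
rewrite size_subpath // in l1_lt.
have l1_le := ltnW l1_lt.
rewrite drop_subpath // in Fx2; rewrite take_subpath // in Fy1.
have Sx2 := IHl (l - l1) ltac:(lia) (s + l1) x2 ltac:(lia) ltac:(lia) Fx2.
have Sy1 := IHl l1 l1_lt s y1 l1_gt0 ltac:(lia) Fy1.
apply: (tspan_bind (tspan_mul l1 Sx2 Sy1)) => _ [z2 [z1 [Pz2 Pz1 ->]]].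
apply: tspan_in; rewrite -(subnKC l1_le).
exact: irr_products_from_mul.
Qed.

End Decomposition.

Theorem mainTheorem2 (k : fieldType) (Q0 : Type) (n : Q0 -> Q0 -> nat)
    (G : fam k n -> Prop) (HG : is_group G)
    (arrs : seq (Q0 * Q0)) (Hcomp : composable arrs)
    (Hnz : all (fun a => 0 < n a.1 a.2) arrs) (Hm : 0 < size arrs)
    (Irr : nat -> nat -> tensor k -> Prop)
    (HIrr : forall s l, 0 < l -> s + l <= size arrs ->
              irr_space G (subpath arrs s l) (Irr s l)) :
  forall x, fixed G arrs x -> tspan (irr_products Irr (size arrs)) x.
Proof.
move=> x Fx.
have Fx_full : fixed G (subpath arrs 0 (size arrs)) x by rewrite subpath_full.
by apply: (fixed_subpath_irr_products HIrr Hm _ Fx_full).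
Qed.
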